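(* Let $d\ge3$, $\alpha\in(0,1/2)$, $z\in(0,1)$, and for $\beta>0$ set $y=y(\beta)=-\beta^{-1}\log z$. Let $r_1,r_2$ be independent with distribution $\alpha\delta_{-1}+(1-2\alpha)\delta_0+\alpha\delta_1$, let $\rho_i(\sigma)=\frac{1+\sigma r_i}{2}$ for $\sigma=\pm1$, and $X_2=1-(1-e^{-\beta})\sum_{\tau\in\{\pm1\}}\rho_1(\tau)\rho_2(\tau)$. Then \[\lim_{\beta\to\infty}\log\mathbb{E}[X_2^y]=\log(1-2\alpha^2+2\alpha^2z).\]
   Context: $\delta_x$ denotes the point mass at $x$. *)

From Stdlib Require Import Reals Lra List.
From Coquelicot Require Import Coquelicot.
Import ListNotations.
Open Scope R_scope.

(* The law alpha*delta_{-1} + (1-2 alpha)*delta_0 + alpha*delta_1,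
   as a list of (atom, mass) pairs. *)
Definition rlaw (alpha : R) : list (R * R) :=
  [(-1, alpha); (0, 1 - 2 * alpha); (1, alpha)].

Definition rho (r sigma : R) : R := (1 + sigma * r) / 2.

Definition X2 (beta r1 r2 : R) : R :=
  1 - (1 - exp (- beta)) * (rho r1 1 * rho r2 1 + rho r1 (-1) * rho r2 (-1)).

Definition yexp (z beta : R) : R := - (/ beta) * ln z.

(* E[ X_2^y ] for r1, r2 independent with law rlaw alpha:
   the sum over the product law of the two (finite) marginals. *)
Definition EX2y (alpha z beta : R) : R :=
  fold_right Rplus 0
    (map (fun p1 : R * R =>
       fold_right Rplus 0
         (map (fun p2 : R * R =>
            snd p1 * snd p2 * Rpower (X2 beta (fst p1) (fst p2)) (yexp z beta))
          (rlaw alpha)))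
     (rlaw alpha)).

(* X2 only depends on r1 r2: it equals e^{-beta} when r1 r2 = 1 (mass 2 alpha^2),
   1 when r1 r2 = -1 (mass 2 alpha^2) and (1 + e^{-beta})/2 when r1 r2 = 0
   (mass 1 - 4 alpha^2).  Since e^{-beta y} = z for every beta, the first kind
   contributes exactly 2 alpha^2 z, while ((1 + e^{-beta})/2)^y -> (1/2)^0 = 1
   because y -> 0.  Hence E[X2^y] -> 1 - 2 alpha^2 + 2 alpha^2 z > 0, and ln is
   continuous there. *)
From Stdlib Require Import Reals Lra.
From Coquelicot Require Import Coquelicot.
Open Scope R_scope.

Lemma X2_prod b r1 r2 : X2 b r1 r2 = 1 - (1 - exp (- b)) * (1 + r1 * r2) / 2.
Proof. unfold X2, rho; field. Qed.

Lemma X2_aligned b r1 r2 : r1 * r2 = 1 -> X2 b r1 r2 = exp (- b).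
Proof. intros Hr; rewrite X2_prod, Hr; field. Qed.

Lemma X2_opposed b r1 r2 : r1 * r2 = -1 -> X2 b r1 r2 = 1.
Proof. intros Hr; rewrite X2_prod, Hr; field. Qed.

Lemma X2_vacant b r1 r2 : r1 * r2 = 0 -> X2 b r1 r2 = (1 + exp (- b)) / 2.
Proof. intros Hr; rewrite X2_prod, Hr; field. Qed.

Lemma Rpower_1_l y : Rpower 1 y = 1.
Proof. unfold Rpower; rewrite ln_1, Rmult_0_r; apply exp_0. Qed.

Lemma Rpower_exp_opp_yexp z b : 0 < z -> 0 < b -> Rpower (exp (- b)) (yexp z b) = z.
Proof.
  intros Hz Hb; unfold Rpower, yexp; rewrite ln_exp.
  replace (- / b * ln z * - b) with (ln z) by (field; lra).
  now apply exp_ln.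
Qed.

Lemma EX2y_closed_form alpha z b : 0 < z -> 0 < b ->
  EX2y alpha z b = 2 * alpha ^ 2 * z + 2 * alpha ^ 2
    + (1 - 4 * alpha ^ 2) * Rpower ((1 + exp (- b)) / 2) (yexp z b).
Proof.
  intros Hz Hb; unfold EX2y, rlaw; cbn [List.map List.fold_right fst snd].
  repeat match goal with
  | |- context [X2 b ?r1 ?r2] =>
      first [ rewrite (X2_aligned b r1 r2) by ring
            | rewrite (X2_opposed b r1 r2) by ring
            | rewrite (X2_vacant b r1 r2) by ring ]
  end.
  rewrite Rpower_1_l, Rpower_exp_opp_yexp by assumption.
  ring.
Qed.

Lemma is_lim_Rpower (f g : R -> R) (x : Rbar) (a c : R) : 0 < a ->
  is_lim f x a -> is_lim g x c ->
  is_lim (fun t => Rpower (f t) (g t)) x (Rpower a c).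
Proof.
  intros Ha Hf Hg; unfold Rpower.
  apply (is_lim_comp_continuous (fun t => g t * ln (f t))); [|apply continuous_exp].
  apply (is_lim_mult _ _ _ c (ln a)); [exact Hg| |exact I].
  apply (is_lim_comp_continuous f ln); [exact Hf|now apply continuous_ln].
Qed.

Lemma is_lim_exp_opp : is_lim (fun b => exp (- b)) p_infty 0.
Proof.
  apply (is_lim_comp exp Ropp p_infty 0 m_infty).
  - apply is_lim_exp_m.
  - apply (is_lim_opp id p_infty p_infty), is_lim_id.
  - exists 0; intros y _; discriminate.
Qed.

Lemma is_lim_yexp z : is_lim (yexp z) p_infty 0.
Proof.
  apply (is_lim_ext (fun b => - ln z * / b)); [intros b; unfold yexp; ring|].
  replace (Finite 0) with (Rbar_mult (- ln z) (Rbar_inv p_infty))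
    by (simpl; f_equal; ring).
  apply is_lim_mult; [apply is_lim_const| |exact I].
  apply is_lim_inv; [apply is_lim_id|discriminate].
Qed.

Lemma is_lim_Rpower_vacant z :
  is_lim (fun b => Rpower ((1 + exp (- b)) / 2) (yexp z b)) p_infty 1.
Proof.
  replace (Finite 1) with (Finite (Rpower ((1 + 0) / 2) 0))
    by (rewrite Rpower_O; [reflexivity|lra]).
  apply is_lim_Rpower; [lra| |apply is_lim_yexp].
  apply (is_lim_div _ _ _ (1 + 0) 2); [| apply is_lim_const | |reflexivity].
  - apply (is_lim_plus _ _ _ 1 0); [apply is_lim_const|apply is_lim_exp_opp|reflexivity].
  - intros H; injection H; lra.
Qed.

Theorem lemma6p1 (d : nat) (alpha z : R) :
  (3 <= d)%nat -> 0 < alpha < 1 / 2 -> 0 < z < 1 ->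
  is_lim (fun beta => ln (EX2y alpha z beta)) p_infty
    (ln (1 - 2 * alpha ^ 2 + 2 * alpha ^ 2 * z)).
Proof.
  intros _ Ha Hz.
  set (E b := 2 * alpha ^ 2 * z + 2 * alpha ^ 2
                + (1 - 4 * alpha ^ 2) * Rpower ((1 + exp (- b)) / 2) (yexp z b)).
  apply (is_lim_ext_loc (fun b => ln (E b))).
  { exists 0; intros b Hb; unfold E; rewrite EX2y_closed_form by lra; reflexivity. }
  apply (is_lim_comp_continuous E ln); [|apply continuous_ln; nra].
  replace (1 - 2 * alpha ^ 2 + 2 * alpha ^ 2 * z)
    with (2 * alpha ^ 2 * z + 2 * alpha ^ 2 + (1 - 4 * alpha ^ 2) * 1) by ring.
  apply (is_lim_plus _ _ _ (2 * alpha ^ 2 * z + 2 * alpha ^ 2) ((1 - 4 * alpha ^ 2) * 1));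
    [apply is_lim_const| |reflexivity].
  apply (is_lim_scal_l _ _ _ 1), is_lim_Rpower_vacant.
Qed.
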